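(* Let $J-CI=L^{(1)}\cdots L^{(p)}U$ be a Darboux factorization and, for each $j=0,1,\ldots,p$, let $\nu^{(j)}=(\nu^{(j)}_1,\ldots,\nu^{(j)}_p)$ be a vector of $p$-orthogonality for $\{P^{(j)}_n\}$. Then for each $j=0,1,\ldots,p-1$: (a) $\big(\nu^{(j+1)}_1,\ldots,\nu^{(j+1)}_{p-1},\,(z-C)\nu^{(j)}_1\big)$ is a vector of $p$-orthogonality for $\{P^{(j+1)}_n\}$; (b) $\big(\nu^{(j)}_1,\,\nu^{(j+1)}_1,\ldots,\nu^{(j+1)}_{p-1}\big)$ is a vector of $p$-orthogonality for $\{P^{(j)}_n\}$.
   Context: Fix $p\in\mathbb{N}$. Let $J=(a_{n,m})_{n,m\ge0}$ be an infinite matrix with $a_{n,n+1}=1$, $a_{n,m}=0$ for $m>n+1$ or $m<n-p$, and $a_{n+p,n}\neq0$ for all $n\ge0$. Define polynomials by $P_{-p}=\cdots=P_{-1}=0$, $P_0\equiv1$, $P_{n+1}(z)=(z-a_{n,n})P_n(z)-\sum_{i=1}^p a_{n,n-i}P_{n-i}(z)$ for $n\ge0$. Fix $C\in\mathbb{C}$ with $P_n(C)\neq0$ for all $n\ge1$. A Darboux factorization of $J-CI$ is a factorization $J-CI=L^{(1)}L^{(2)}\cdots L^{(p)}U$ where, indexing rows and columns by $1,2,\ldots$, $U$ is upper bidiagonal with $U_{k,k}=\gamma_{(k-1)(p+1)+1}$, $U_{k,k+1}=1$, and for $j=1,\ldots,p$, $L^{(j)}$ is lower bidiagonal with ones on the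 diagonal and $L^{(j)}_{k+1,k}=\gamma_{(k-1)(p+1)+j+1}\neq0$ for all $k\ge1$ (the $\gamma_i$ being complex numbers). Its Darboux transformations are $J^{(j)}=CI+L^{(j+1)}\cdots L^{(p)}UL^{(1)}\cdots L^{(j)}$, $j=1,\ldots,p$; also $J^{(0)}:=J$. Each $J^{(j)}$ is lower Hessenberg with ones on the superdiagonal, and $\{P^{(j)}_n\}_{n\ge0}$ denotes the unique sequence of polynomials with $P^{(j)}_0\equiv1$ such that $v^{(j)}(z)=(P^{(j)}_0(z),P^{(j)}_1(z),\ldots)^T$ satisfies $J^{(j)}v^{(j)}(z)=zv^{(j)}(z)$; $P^{(0)}_n=P_n$. A vector of $p$-orthogonality for a sequence of polynomials $\{Q_n\}$ is a vector $(\nu_1,\ldots,\nu_p)$ of linear functionals on polynomials with, for each $r=1,\ldots,p$ and $k=0,1,\ldots$: $\nu_r[z^kQ_n]=0$ for all $n\ge kp+r$, and $\nu_r[z^kQ_{kp+r-1}]\neq0$. For a functional $\mu$, $(z-C)\mu$ is the functional $q\mapsto\mu[(z-C)q]$. *)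

From HB Require Import structures.
From mathcomp Require Import all_boot all_order all_algebra.
Set Implicit Arguments. Unset Strict Implicit. Unset Printing Implicit Defensive.
Import Order.TTheory GRing.Theory Num.Theory.
Local Open Scope ring_scope.

Section Defs.
Variable R : fieldType.

(* Infinite matrices are functions nat -> nat -> R, indexed from 0
   (paper's row/column k is our k-1). *)
Definition infmx := nat -> nat -> R.

(* Product of infinite matrices A*B, valid (equal to the true, finite-sum
   product) whenever row i of A vanishes beyond column i+1, which holds for
   every left factor used below (lower bidiagonal L's, L..LU, L..LUL..L). *)
Definition mulinf (A B : infmx) : infmx :=
  fun i k => \sum_(m < i.+2) A i m * B m k.

Definition Umat (gamma : nat -> R) (p : nat) : infmx :=
  fun i k => if k == i then gamma (i * p.+1 + 1)%N
             else if k == i.+1 then 1 else 0.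

Definition Lmat (gamma : nat -> R) (p j : nat) : infmx :=
  fun i k => if i == k then 1
             else if i == k.+1 then gamma (k * p.+1 + j + 1)%N else 0.

Definition LU (gamma : nat -> R) (p j : nat) : infmx :=
  foldr (fun l M => mulinf (Lmat gamma p l) M) (Umat gamma p) (iota j (p.+1 - j)).

(* J^{(j)} = C I + L^{(j+1)} ... L^{(p)} U L^{(1)} ... L^{(j)} for 1 <= j,
   and J^{(0)} = J. *)
Definition Jdarb (J : infmx) (gamma : nat -> R) (p : nat) (C : R) (j : nat)
  : infmx :=
  if j == 0%N then J else
  fun i k => (i == k)%:R * C
    + foldl (fun M l => mulinf M (Lmat gamma p l)) (LU gamma p j.+1) (iota 1 j) i k.

Definition lfun (mu : {poly R} -> R) : Prop :=
  forall (a : R) (x y : {poly R}), mu (a *: x + y) = a * mu x + mu y.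

Definition shiftf (C : R) (mu : {poly R} -> R) : {poly R} -> R :=
  fun q => mu (('X - C%:P) * q).

Definition p_orth (p : nat) (nu : nat -> {poly R} -> R) (Q : nat -> {poly R})
  : Prop :=
  forall r, (1 <= r <= p)%N ->
    [/\ lfun (nu r),
        (forall k n, (k * p + r <= n)%N -> nu r ('X^k * Q n) = 0) &
        (forall k, nu r ('X^k * Q (k * p + r - 1)%N) != 0)].

Definition vec_a (p : nat) (C : R) (nuj nuj1 : nat -> {poly R} -> R)
  : nat -> {poly R} -> R :=
  fun r => if (r < p)%N then nuj1 r else shiftf C (nuj 1%N).

Definition vec_b (nuj nuj1 : nat -> {poly R} -> R) : nat -> {poly R} -> R :=
  fun r => if r == 1%N then nuj 1%N else nuj1 r.-1.

End Defs.

From mathcomp Require Import all_boot all_order all_algebra.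
From mathcomp Require Import zify.
From Stdlib Require Import FunctionalExtensionality.
Set Implicit Arguments. Unset Strict Implicit. Unset Printing Implicit Defensive.
Import Order.TTheory GRing.Theory Num.Theory.
Local Open Scope ring_scope.

(* Reading p-orthogonality of nu_r as "the functional q |-> nu_r(z^k q)
   vanishes on Q_n exactly from n = kp + r on", the theorem becomes a
   statement about how such vanishing indices move along the relations
     P^(j) = L^(j+1) P^(j+1),
     (z - C) P^(j+1) = L^(j+2) ... L^(p) U L^(1) ... L^(j) P^(j).
   Both follow from the eigenvector equations, since J^(j) - C I and
   J^(j+1) - C I differ by moving L^(j+1) from the front to the back, and an
   eigenvector of a Hessenberg matrix with unit superdiagonal is determined by
   its first entry.  A lower bidiagonal factor with nonzero subdiagonal raises
   an exact vanishing index by one, and U, whose diagonal is nonzero, keeps it;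
   so the index kp + r - 1 of nu^(j+1)_(r-1) becomes kp + r for P^(j), and the
   index kp + 1 of nu^(j)_1 becomes kp + p for (z - C) P^(j+1). *)

Lemma iota1S j : iota 1 j.+1 = iota 1 j ++ [:: j.+1].
Proof. by rewrite -[j.+1]addn1 iotaD addnC. Qed.

Section InfiniteMatrixAction.
Variable R : fieldType.
Implicit Types (A B : infmx R) (v x y : nat -> {poly R}).

Definition mulinfv A v : nat -> {poly R} := fun i => \sum_(m < i.+2) A i m *: v m.

Definition lower_hessenberg A := forall m k, (m.+1 < k)%N -> A m k = 0.

Definition zero_below v n := forall m, (m < n)%N -> v m = 0.

Lemma big_ord_widen0 (n N : nat) (f : nat -> {poly R}) :
  (n <= N)%N -> (forall l, (n <= l < N)%N -> f l = 0) ->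
  \sum_(l < n) f l = \sum_(l < N) f l.
Proof.
move=> leNn f0; rewrite (big_ord_widen N f leNn) big_mkcond /=.
apply: eq_bigr => l _; case: ifPn => // /negbTE hl.
by rewrite f0 // ltn_ord andbT leqNgt hl.
Qed.

(* The entry (i, i+2) of [mulinf A B], which [mulinfv] ignores, is
   [A i i.+1 * B i.+1 i.+2]. *)
Lemma mulinfvA A B v i :
  lower_hessenberg B -> (forall i, A i i.+1 * B i.+1 i.+2 = 0) ->
  mulinfv (mulinf A B) v i = mulinfv A (mulinfv B v) i.
Proof.
move=> hB hAB; rewrite /mulinfv /mulinf.
have -> : \sum_(m < i.+2) A i m *: (\sum_(l < m.+2) B m l *: v l)
   = \sum_(m < i.+2) \sum_(l < i.+3) (A i m * B m l) *: v l.
  apply: eq_bigr => m _; rewrite scaler_sumr.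
  rewrite (@big_ord_widen0 m.+2 i.+3 (fun l => A i m *: (B m l *: v l))).
  - by apply: eq_bigr => l _; rewrite scalerA.
  - by have := ltn_ord m.
  - by move=> l /andP[hl _]; rewrite hB ?scale0r ?scaler0.
rewrite [RHS]exchange_big /= [RHS]big_ord_recr /=.
rewrite [X in _ = _ + X](_ : _ = 0) ?addr0; last first.
  rewrite -scaler_suml big_ord_recr /= hAB addr0.
  by rewrite big1 ?scale0r // => m _; rewrite hB ?mulr0 //; have := ltn_ord m.
by apply: eq_bigr => l _; rewrite scaler_suml.
Qed.

Lemma mulinfvD A B v i :
  mulinfv (fun i k => A i k + B i k) v i = mulinfv A v i + mulinfv B v i.
Proof. by rewrite /mulinfv -big_split; apply: eq_bigr => m _; rewrite scalerDl. Qed.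

Lemma mulinfv_scalar (C : R) v i :
  mulinfv (fun i k => (i == k)%:R * C) v i = C *: v i.
Proof.
rewrite /mulinfv big_ord_recr big_ord_recr /= big1 ?add0r; last first.
  by move=> k _; rewrite (gtn_eqF (ltn_ord k)) mul0r scale0r.
by rewrite eqxx (ltn_eqF (ltnSn i)) mul0r scale0r addr0 mul1r.
Qed.

Lemma mulinfv_mull A (q : {poly R}) v i :
  mulinfv A (fun m => q * v m) i = q * mulinfv A v i.
Proof. by rewrite /mulinfv mulr_sumr; apply: eq_bigr => m _; rewrite scalerAr. Qed.

Lemma mulinfvB A x y :
  mulinfv A (fun m => x m - y m) = (fun i => mulinfv A x i - mulinfv A y i).
Proof.
apply: functional_extensionality => i.
by rewrite /mulinfv -sumrB; apply: eq_bigr => m _; rewrite scalerBr.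
Qed.

Lemma mulinfv_delta A i n :
  (i < n.+2)%N -> mulinfv A (fun m => (m == i)%:R) n = (A n i)%:P.
Proof.
move=> hi; rewrite /mulinfv (bigD1 (Ordinal hi)) //= eqxx -alg_polyC.
rewrite big1 ?addr0 // => m /negbTE m_neq_i.
by rewrite -[i]/(nat_of_ord (Ordinal hi)) val_eqE m_neq_i scaler0.
Qed.

End InfiniteMatrixAction.

Section LinearFunctionals.
Variable R : fieldType.
Implicit Types (phi : {poly R} -> R) (e : nat -> {poly R}).

Lemma lfun0 phi : lfun phi -> phi 0 = 0.
Proof.
move=> h; have := h 1 0 0; rewrite scale1r addr0 mul1r -{1}[phi 0]addr0.
by move=> /addrI <-.
Qed.

Lemma lfunD phi x y : lfun phi -> phi (x + y) = phi x + phi y.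
Proof. by move=> h; have := h 1 x y; rewrite scale1r mul1r. Qed.

Lemma lfunZ phi a x : lfun phi -> phi (a *: x) = a * phi x.
Proof. by move=> h; have := h a x 0; rewrite addr0 (lfun0 h) addr0. Qed.

Lemma lfun_mull phi q : lfun phi -> lfun (fun x => phi (q * x)).
Proof. by move=> h a x y; rewrite mulrDr -scalerAr h. Qed.

Lemma lfun_coef0 : lfun (fun q : {poly R} => q`_0).
Proof. by move=> a x y; rewrite coefD coefZ. Qed.

Definition vanishes_from phi e t := forall m, (t <= m)%N -> phi (e m) = 0.

Definition vanishes_exactly_from phi e t :=
  vanishes_from phi e t /\ phi (e t.-1) != 0.

Lemma eq_vanishes_exactly_from phi psi e f t :
  (forall m, phi (e m) = psi (f m)) ->
  vanishes_exactly_from phi e t -> vanishes_exactly_from psi f t.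
Proof. by move=> ef [he het]; split=> [m hm|]; rewrite -ef //; exact: he. Qed.

Section OrthogonalityConditions.
Variables (p r : nat) (nu : {poly R} -> R) (Q : nat -> {poly R}).

Lemma vanishes_exactly_from_orth :
  (forall k n, (k * p + r <= n)%N -> nu ('X^k * Q n) = 0) ->
  (forall k, nu ('X^k * Q (k * p + r - 1)%N) != 0) ->
  forall k, vanishes_exactly_from (fun q => nu ('X^k * q)) Q (k * p + r).
Proof. by move=> hv hn k; split=> [n|]; [exact: hv | rewrite -subn1]. Qed.

Lemma orth_of_vanishes_exactly_from :
  lfun nu ->
  (forall k, vanishes_exactly_from (fun q => nu ('X^k * q)) Q (k * p + r)) ->
  [/\ lfun nu, forall k n, (k * p + r <= n)%N -> nu ('X^k * Q n) = 0 &
      forall k, nu ('X^k * Q (k * p + r - 1)%N) != 0].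
Proof.
move=> hnu hQ; split=> // [k n|k]; have [hv hn] := hQ k; first exact: hv.
by rewrite subn1.
Qed.

End OrthogonalityConditions.

End LinearFunctionals.

Section DarbouxFactors.
Variables (R : fieldType) (gamma : nat -> R) (p : nat).
Implicit Types (phi : {poly R} -> R) (v e x y : nat -> {poly R}).

Local Notation U := (Umat gamma p).
Local Notation L := (Lmat gamma p).

Lemma Umat_hessenberg : lower_hessenberg U.
Proof. by move=> m k hk; rewrite /Umat ifN ?ifN //; apply/eqP; lia. Qed.

Lemma Lmat_superdiag l i : L l i i.+1 = 0.
Proof. by rewrite /Lmat ifN ?ifN //; apply/eqP; lia. Qed.

Lemma Lmat_hessenberg l : lower_hessenberg (L l).
Proof. by move=> m k hk; rewrite /Lmat ifN ?ifN //; apply/eqP; lia. Qed.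

Lemma mulinf_Lmat_hessenberg l M :
  lower_hessenberg M -> lower_hessenberg (mulinf (L l) M).
Proof.
move=> hM m k hk; rewrite /mulinf big1 // => i _.
case: (ltnP (nat_of_ord i) m.+1) => him; first by rewrite hM ?mulr0 //; lia.
by rewrite /Lmat ifN ?ifN ?mul0r //; apply/eqP; have := ltn_ord i; lia.
Qed.

Lemma mulinfv_Umat e m :
  mulinfv U e m = gamma (m * p.+1 + 1)%N *: e m + e m.+1.
Proof.
rewrite /mulinfv big_ord_recr big_ord_recr /= /Umat.
rewrite big1 ?add0r; last first.
  by move=> k _; rewrite ifN ?ifN ?scale0r //; apply/eqP; have := ltn_ord k; lia.
by rewrite eqxx ifN ?eqxx ?scale1r //; apply/eqP; lia.
Qed.

Lemma mulinfv_Lmat l e m :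
  mulinfv (L l) e m =
  e m + (if m is m'.+1 then gamma (m' * p.+1 + l + 1)%N *: e m' else 0).
Proof.
rewrite /mulinfv big_ord_recr big_ord_recr /= /Lmat eqxx scale1r.
rewrite ifN ?ifN 1?ifN ?scale0r ?addr0; try by apply/eqP; lia.
case: m => [|m]; first by rewrite big_ord0 add0r addr0.
rewrite big_ord_recr /= big1 ?add0r; last first.
  by move=> k _; rewrite ifN ?ifN ?scale0r //; apply/eqP; have := ltn_ord k; lia.
by rewrite ifN ?eqxx 1?addrC //; apply/eqP; lia.
Qed.

Definition mulLs (s : seq nat) v : nat -> {poly R} :=
  foldr (fun l w => mulinfv (L l) w) v s.

Lemma mulLs_cat s1 s2 v : mulLs (s1 ++ s2) v = mulLs s1 (mulLs s2 v).
Proof. exact: foldr_cat. Qed.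

Lemma mulLsB s x y :
  mulLs s (fun m => x m - y m) = (fun m => mulLs s x m - mulLs s y m).
Proof. by elim: s => [//|l s IH] /=; rewrite IH mulinfvB. Qed.

Lemma mulinfv_LUmat s v i :
  mulinfv (foldr (fun l M => mulinf (L l) M) U s) v i = mulLs s (mulinfv U v) i.
Proof.
have hess s' : lower_hessenberg (foldr (fun l M => mulinf (L l) M) U s').
  by elim: s' => [|l s' IH] /=; [exact: Umat_hessenberg | exact: mulinf_Lmat_hessenberg].
elim: s i => [//|l s IH] i /=; rewrite mulinfvA //; last first.
  by move=> k; rewrite Lmat_superdiag mul0r.
by apply: eq_bigr => m _; rewrite IH.
Qed.

Lemma mulinfv_mulinf_Lmats s A v i :
  mulinfv (foldl (fun M l => mulinf M (L l)) A s) v i = mulinfv A (mulLs s v) i.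
Proof.
elim: s A => [//|l s IH] A /=; rewrite IH mulinfvA //; first exact: Lmat_hessenberg.
by move=> k; rewrite Lmat_superdiag mulr0.
Qed.

(* The action of J^(j) - C I = L^(j+1) ... L^(p) U L^(1) ... L^(j). *)
Definition mulJsubC j v : nat -> {poly R} :=
  mulLs (iota j.+1 (p - j)) (mulinfv U (mulLs (iota 1 j) v)).

Lemma mulinfv_Jdarb (J : infmx R) (C : R) :
  (forall i k, J i k - (i == k)%:R * C = LU gamma p 1 i k) ->
  forall j v n, mulinfv (Jdarb J gamma p C j) v n = C *: v n + mulJsubC j v n.
Proof.
move=> hfact j v n; rewrite /Jdarb; case: eqP => [-> | _].
  have -> : mulinfv J v n =
            mulinfv (fun i k => (i == k)%:R * C + LU gamma p 1 i k) v n.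
    by apply: eq_bigr => m _; rewrite -hfact addrC subrK.
  rewrite mulinfvD mulinfv_scalar /LU mulinfv_LUmat.
  by rewrite /mulJsubC subn0 subSS subn0.
by rewrite mulinfvD mulinfv_scalar mulinfv_mulinf_Lmats /LU mulinfv_LUmat subSS.
Qed.

Lemma mulJsubCB j x y :
  mulJsubC j (fun m => x m - y m) = (fun m => mulJsubC j x m - mulJsubC j y m).
Proof. by rewrite /mulJsubC mulLsB mulinfvB mulLsB. Qed.

Lemma zero_below_Lmat l e n :
  zero_below e n -> zero_below (mulinfv (L l) e) n /\ mulinfv (L l) e n = e n.
Proof.
move=> e0; split=> [m hm|]; rewrite mulinfv_Lmat.
  rewrite e0 //; case: m hm => [|m] hm; first by rewrite addr0.
  by rewrite e0 ?scaler0 ?addr0 //; lia.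
by case: n e0 => [|n] e0; rewrite ?addr0 // (e0 n) // scaler0 addr0.
Qed.

Lemma zero_below_mulLs s e n :
  zero_below e n -> zero_below (mulLs s e) n /\ mulLs s e n = e n.
Proof.
move=> e0; elim: s => [//|l s [IH0 IHn]] /=.
by have [h0 ->] := zero_below_Lmat l IH0.
Qed.

Lemma zero_below_Umat e n :
  zero_below e n.+1 -> zero_below (mulinfv U e) n /\ mulinfv U e n = e n.+1.
Proof.
move=> e0; split=> [m hm|]; rewrite mulinfv_Umat.
  by rewrite !e0 ?scaler0 ?addr0 //; lia.
by rewrite e0 ?scaler0 ?add0r.
Qed.

Lemma mulJsubC_zero_below j e n : zero_below e n.+1 -> mulJsubC j e n = e n.+1.
Proof.
move=> e0; rewrite /mulJsubC.
have [e1 e1n] := zero_below_mulLs (iota 1 j) e0.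
have [e2 e2n] := zero_below_Umat e1.
by have [_ ->] := zero_below_mulLs (iota j.+1 (p - j)) e2; rewrite e2n e1n.
Qed.

(* J^(j) is lower Hessenberg with ones on the superdiagonal, so an eigenvector
   is determined by its first entry. *)
Lemma mulJsubC_eigvec_unique j (C : R) x y :
  x 0%N = y 0%N ->
  (forall n, mulJsubC j x n = ('X - C%:P) * x n) ->
  (forall n, mulJsubC j y n = ('X - C%:P) * y n) ->
  forall n, x n = y n.
Proof.
move=> xy0 hx hy.
pose d m := x m - y m.
have hd n : mulJsubC j d n = ('X - C%:P) * d n.
  by rewrite /d mulJsubCB hx hy mulrBr.
suff d0 n : zero_below d n.+1.
  by move=> n; apply/eqP; rewrite -subr_eq0; apply/eqP; exact: d0.
elim: n => [|n IH] m; first by rewrite ltnS leqn0 => /eqP ->; rewrite /d xy0 subrr.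
rewrite ltnS leq_eqVlt => /orP[/eqP ->|]; last exact: IH.
by rewrite -(mulJsubC_zero_below j IH) hd IH // mulr0.
Qed.

Lemma vanishes_from_Lmat l phi e t :
  lfun phi -> vanishes_from phi e t -> vanishes_from phi (mulinfv (L l) e) t.+1.
Proof.
move=> hphi he [//|m] hm; rewrite mulinfv_Lmat (lfunD _ _ hphi) (lfunZ _ _ hphi).
by rewrite !he ?mulr0 ?addr0 //; lia.
Qed.

Lemma vanishes_from_Umat phi e t :
  lfun phi -> vanishes_from phi e t -> vanishes_from phi (mulinfv U e) t.
Proof.
move=> hphi he m hm; rewrite mulinfv_Umat (lfunD _ _ hphi) (lfunZ _ _ hphi).
by rewrite !he ?mulr0 ?addr0 //; lia.
Qed.

Lemma vanishes_from_mulLs s phi e t :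
  lfun phi -> vanishes_from phi e t -> vanishes_from phi (mulLs s e) (t + size s).
Proof.
move=> hphi he; elim: s => [|l s IH] /=; first by rewrite addn0.
by rewrite addnS; apply: vanishes_from_Lmat.
Qed.

Lemma vanishes_exactly_from_Lmat l phi e t :
  (forall k, gamma (k * p.+1 + l + 1)%N != 0) -> (0 < t)%N -> lfun phi ->
  vanishes_exactly_from phi e t ->
  vanishes_exactly_from phi (mulinfv (L l) e) t.+1.
Proof.
move=> hL t_gt0 hphi [he het]; split; first exact: vanishes_from_Lmat.
rewrite /= mulinfv_Lmat (lfunD _ _ hphi); case: t t_gt0 he het => [//|t] _ he het.
by rewrite (lfunZ _ _ hphi) he // add0r mulf_neq0.
Qed.

Lemma vanishes_exactly_from_Umat phi e t :
  (forall i, gamma (i * p.+1 + 1)%N != 0) -> (0 < t)%N -> lfun phi ->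
  vanishes_exactly_from phi e t -> vanishes_exactly_from phi (mulinfv U e) t.
Proof.
move=> hU t_gt0 hphi [he het]; split; first exact: vanishes_from_Umat.
rewrite mulinfv_Umat (lfunD _ _ hphi) (lfunZ _ _ hphi) prednK // (he t) //.
by rewrite addr0 mulf_neq0.
Qed.

Lemma vanishes_exactly_from_mulLs s phi e t :
  (forall l, l \in s -> forall k, gamma (k * p.+1 + l + 1)%N != 0) ->
  (0 < t)%N -> lfun phi -> vanishes_exactly_from phi e t ->
  vanishes_exactly_from phi (mulLs s e) (t + size s).
Proof.
move=> hL t_gt0 hphi he; elim: s hL => [|l s IH] hL /=; first by rewrite addn0.
rewrite addnS; apply: vanishes_exactly_from_Lmat => //.
- by apply: hL; rewrite inE eqxx.
- by rewrite addn_gt0 t_gt0.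
- by apply: IH => l' hl'; apply: hL; rewrite inE hl' orbT.
Qed.

End DarbouxFactors.

Section DarbouxTransforms.
Variables (R : fieldType) (p : nat) (J : infmx R) (C : R) (gamma : nat -> R).
Variables (Pj : nat -> nat -> {poly R}) (nu : nat -> nat -> {poly R} -> R).
Hypothesis p_gt0 : (0 < p)%N.
Hypothesis J_corner_neq0 : forall n, J (n + p)%N n != 0.
Hypothesis Lmat_subdiag_neq0 :
  forall j k, (1 <= j <= p)%N -> gamma (k * p.+1 + j + 1)%N != 0.
Hypothesis darboux_factorization :
  forall i k, J i k - (i == k)%:R * C = LU gamma p 1 i k.
Hypothesis Pj_0 : forall j, (j <= p)%N -> Pj j 0%N = 1.
Hypothesis Pj_eigvec : forall j n, (j <= p)%N ->
  \sum_(m < n.+2) Jdarb J gamma p C j n m *: Pj j m = 'X * Pj j n.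
Hypothesis nu_p_orth : forall j, (j <= p)%N -> p_orth p (nu j) (Pj j).

Local Notation U := (Umat gamma p).
Local Notation L := (Lmat gamma p).
Local Notation mulLs := (mulLs gamma p).
Local Notation mulJsubC := (mulJsubC gamma p).

Lemma mulJsubC_Pj j n : (j <= p)%N -> mulJsubC j (Pj j) n = ('X - C%:P) * Pj j n.
Proof.
move=> le_jp; have := Pj_eigvec n le_jp.
rewrite -/(mulinfv _ _ _) mulinfv_Jdarb // => eig.
by rewrite mulrBl -eig mul_polyC addrC addKr.
Qed.

(* If U_{i,i} were 0, then (J - C I) e_i would vanish from index i + p on,
   against J_{i+p,i} != 0. *)
Lemma Umat_diag_neq0 i : gamma (i * p.+1 + 1)%N != 0.
Proof.
apply/eqP => Uii0; pose d m : {poly R} := (m == i)%:R.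
have Ud0 : vanishes_from (fun q => q`_0) (mulinfv U d) i.
  move=> m le_im; rewrite mulinfv_Umat /d (_ : (m.+1 == i) = false) ?addr0.
    by case: eqP => [->|_]; rewrite ?Uii0 ?scale0r ?mulr0n ?scaler0 coef0.
  by apply/eqP; lia.
have := mulinfv_Jdarb darboux_factorization 0 d (i + p).
rewrite /Jdarb /= mulinfv_delta; last by lia.
move/(congr1 (fun q : {poly R} => q`_0)); rewrite coefC coefD coefZ.
rewrite {1}/d (_ : (i + p == i)%N = false) ?coef0 ?mulr0 ?add0r; last first.
  by apply/eqP; lia.
rewrite /mulJsubC /= subn0 (vanishes_from_mulLs _ _ (@lfun_coef0 R) Ud0).
  by move/eqP; rewrite (negbTE (J_corner_neq0 i)).
by rewrite size_iota.
Qed.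

Lemma iota_Lmat_subdiag_neq0 a b :
  (0 < a)%N -> (a + b <= p.+1)%N ->
  forall l, l \in iota a b -> forall k, gamma (k * p.+1 + l + 1)%N != 0.
Proof.
move=> a_gt0 le_abp l; rewrite mem_iota => /andP[hal hlb] k.
by apply: Lmat_subdiag_neq0; apply/andP; lia.
Qed.

Lemma Pj_Lmat j n : (j < p)%N -> Pj j n = mulinfv (L j.+1) (Pj j.+1) n.
Proof.
move=> lt_jp; move: n.
apply: (mulJsubC_eigvec_unique (gamma := gamma) (p := p) (j := j) (C := C)
          (y := mulinfv (L j.+1) (Pj j.+1))).
- by rewrite mulinfv_Lmat !Pj_0 ?addr0 //; lia.
- by move=> n; rewrite mulJsubC_Pj //; lia.
move=> n; rewrite -mulinfv_mull.
have -> : (fun m => ('X - C%:P) * Pj j.+1 m) = mulJsubC j.+1 (Pj j.+1).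
  by apply: functional_extensionality => m; rewrite mulJsubC_Pj.
rewrite /mulJsubC (_ : p - j = (p - j.+1).+1)%N; last by lia.
by rewrite iota1S mulLs_cat.
Qed.

Lemma shift_Pj_succ j : (j < p)%N ->
  (fun m => ('X - C%:P) * Pj j.+1 m) =
  mulLs (iota j.+2 (p - j.+1)) (mulinfv U (mulLs (iota 1 j) (Pj j))).
Proof.
move=> lt_jp; apply: functional_extensionality => m.
rewrite -mulJsubC_Pj // /mulJsubC.
have -> : Pj j = mulinfv (L j.+1) (Pj j.+1).
  by apply: functional_extensionality => n; exact: Pj_Lmat.
by rewrite iota1S mulLs_cat.
Qed.

Lemma vanishes_exactly_from_shift_Pj_succ j phi t :
  (j < p)%N -> (0 < t)%N -> lfun phi -> vanishes_exactly_from phi (Pj j) t ->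
  vanishes_exactly_from phi (fun m => ('X - C%:P) * Pj j.+1 m) (t + p.-1).
Proof.
move=> lt_jp t_gt0 hphi hPj; rewrite shift_Pj_succ //.
have L1 := @iota_Lmat_subdiag_neq0 1 j isT (ltac:(lia)).
have L2 := @iota_Lmat_subdiag_neq0 j.+2 (p - j.+1) isT (ltac:(lia)).
have t1_gt0 : (0 < t + size (iota 1 j))%N by lia.
have h1 := vanishes_exactly_from_mulLs L1 t_gt0 hphi hPj.
have h2 := vanishes_exactly_from_Umat Umat_diag_neq0 t1_gt0 hphi h1.
have := vanishes_exactly_from_mulLs L2 t1_gt0 hphi h2.
by rewrite !size_iota (_ : t + j + (p - j.+1) = t + p.-1)%N //; lia.
Qed.

Lemma vanishes_exactly_from_Pj j phi t :
  (j < p)%N -> (0 < t)%N -> lfun phi -> vanishes_exactly_from phi (Pj j.+1) t ->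
  vanishes_exactly_from phi (Pj j) t.+1.
Proof.
move=> lt_jp t_gt0 hphi hPj.
apply: (@eq_vanishes_exactly_from _ phi phi (mulinfv (L j.+1) (Pj j.+1))).
  by move=> m; rewrite -Pj_Lmat.
apply: vanishes_exactly_from_Lmat => // k; apply: Lmat_subdiag_neq0.
by apply/andP; lia.
Qed.

Lemma p_orth_vec_a j : (j < p)%N -> p_orth p (vec_a p C (nu j) (nu j.+1)) (Pj j.+1).
Proof.
move=> lt_jp r /andP[r_gt0 le_rp]; rewrite /vec_a.
case: ltnP => [lt_rp | le_pr]; first by apply: nu_p_orth; rewrite ?r_gt0.
have -> : r = p by lia.
have [hl hv hn] := nu_p_orth (ltnW lt_jp) (ltac:(lia) : (1 <= 1 <= p)%N).
apply: orth_of_vanishes_exactly_from; first exact: lfun_mull.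
move=> k; have hPj := vanishes_exactly_from_orth hv hn k.
have t_gt0 : (0 < k * p + 1)%N by rewrite addn1.
have := vanishes_exactly_from_shift_Pj_succ lt_jp t_gt0 (lfun_mull _ hl) hPj.
rewrite -addnA (_ : 1 + p.-1 = p)%N; last by lia.
apply: eq_vanishes_exactly_from => m.
by rewrite /shiftf (mulrCA 'X^k).
Qed.

Lemma p_orth_vec_b j : (j < p)%N -> p_orth p (vec_b (nu j) (nu j.+1)) (Pj j).
Proof.
move=> lt_jp r /andP[r_gt0 le_rp]; rewrite /vec_b.
case: eqP => [-> | r_neq1]; first by apply: nu_p_orth; [exact: ltnW | rewrite p_gt0].
have [hl hv hn] := nu_p_orth lt_jp (ltac:(lia) : (1 <= r.-1 <= p)%N).
apply: orth_of_vanishes_exactly_from => // k.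
have hPj := vanishes_exactly_from_orth hv hn k.
have := vanishes_exactly_from_Pj lt_jp _ (lfun_mull _ hl) hPj.
by rewrite (_ : (k * p + r.-1).+1 = k * p + r)%N; [apply; lia | lia].
Qed.

End DarbouxTransforms.

Theorem lemma5 (R : numClosedFieldType) (p : nat) (hp : (0 < p)%N)
  (J : nat -> nat -> R)
  (hJsup : forall n, J n n.+1 = 1)
  (hJup : forall n m, (n.+1 < m)%N -> J n m = 0)
  (hJlow : forall n m, (m + p < n)%N -> J n m = 0)
  (hJdiag : forall n, J (n + p)%N n != 0)
  (P : nat -> {poly R})
  (hP0 : P 0%N = 1)
  (hPrec : forall n, P n.+1 = ('X - (J n n)%:P) * P n
             - \sum_(1 <= i < p.+1 | (i <= n)%N) J n (n - i)%N *: P (n - i)%N)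
  (C : R) (hC : forall n, (0 < n)%N -> (P n).[C] != 0)
  (gamma : nat -> R)
  (hgam : forall j k, (1 <= j <= p)%N -> gamma (k * p.+1 + j + 1)%N != 0)
  (hfact : forall i k, J i k - (i == k)%:R * C = LU gamma p 1 i k)
  (Pj : nat -> nat -> {poly R})
  (hPj0 : forall j, (j <= p)%N -> Pj j 0%N = 1)
  (hPjeig : forall j n, (j <= p)%N ->
     \sum_(m < n.+2) Jdarb J gamma p C j n m *: Pj j m = 'X * Pj j n)
  (nu : nat -> nat -> {poly R} -> R)
  (hnu : forall j, (j <= p)%N -> p_orth p (nu j) (Pj j)) :
  forall j, (j < p)%N ->
    p_orth p (vec_a p C (nu j) (nu j.+1)) (Pj j.+1)
    /\ p_orth p (vec_b (nu j) (nu j.+1)) (Pj j).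
Proof.
move=> j lt_jp; split.
- exact: (p_orth_vec_a hp hJdiag hgam hfact hPj0 hPjeig hnu lt_jp).
- exact: (p_orth_vec_b hp hgam hfact hPj0 hPjeig hnu lt_jp).
Qed.
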